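(* (a) Let $\Lambda>0$ and let $Q_1,Q_2:[0,\Lambda]\to\mathbb R$ be continuous and strictly monotone, both strictly increasing or both strictly decreasing. Then there is a unique $\lambda_1\in\arg\min_{\lambda\in[0,\Lambda]}\bigl(Q_1(\lambda)-Q_2(\Lambda-\lambda)\bigr)^2$, i.e. the Wardrop equilibrium $(\lambda_1,\Lambda-\lambda_1)$ exists and is unique. (b) For a platform $i$ with static price $\phi_i\in[0,\phi_h]$ and abandonment rate $\beta_i>0$, the maps $\lambda_i\mapsto\mathcal D_i(\lambda_i)$ and $\lambda_i\mapsto\mathcal B_i(\lambda_i)$, $\lambda_i\ge0$, are continuous and strictly monotone, with the same direction of monotonicity for both platforms, so each of $Q_i=\mathcal D_i$ and $Q_i=\mathcal B_i$ satisfies the hypothesis of (a).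
   Context: Model of platform $i$: passengers arrive as a Poisson process of rate $\lambda_i$; drivers arrive as a Poisson process of rate $\eta_i$ and wait FCFS. A passenger arriving when at least one driver waits is quoted price $\phi_i\in[0,\phi_h]$ and accepts (beginning a ride) with probability $f(\phi_i)$, else leaves; if no driver waits, the passenger is lost. Waiting drivers abandon independently at rate $\beta_i$; rides/breaks last Exp($\nu_i$), after which the driver rejoins the waiting queue with probability $p_i\in[0,1)$ and leaves otherwise. $e_i=\eta_i/(1-p_i)$. Here $f:[0,\phi_h]\to(0,1]$ is strictly concave, strictly decreasing, differentiable, $f(0)=1$. $\mathcal D_i(\lambda_i)=\bigl(\sum_{n\ge0}\frac{e_i^n}{\prod_{a=1}^n(\lambda_i f(\phi_i)+a\beta_i)}\bigr)^{-1}$ is the stationary probability of no waiting driver (empty product $=1$), and $\mathcal B_i=\mathcal D_i+(1-f(\phi_i))(1-\mathcal D_i)$ is the long-run fraction of passengers who do not take a ride. Two platforms share total passenger rate $\Lambda$; the Wardrop equilibrium for QoS metrics $Q_i$ is defined by the argmin in (a). *)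

From Stdlib Require Import Reals Lra.
From Coquelicot Require Import Coquelicot.
Open Scope R_scope.

Definition cont_on (P : R -> Prop) (Q : R -> R) : Prop :=
  forall x, P x -> filterlim Q (within P (locally x)) (locally (Q x)).

Definition strict_incr_on (P : R -> Prop) (Q : R -> R) : Prop :=
  forall x y, P x -> P y -> x < y -> Q x < Q y.

Definition strict_decr_on (P : R -> Prop) (Q : R -> R) : Prop :=
  forall x y, P x -> P y -> x < y -> Q y < Q x.

Definition wardrop_argmin (Lam : R) (Q1 Q2 : R -> R) (l : R) : Prop :=
  0 <= l <= Lam /\
  forall m, 0 <= m <= Lam ->
    (Q1 l - Q2 (Lam - l)) ^ 2 <= (Q1 m - Q2 (Lam - m)) ^ 2.

Definition admissible_f (phih : R) (f : R -> R) : Prop :=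
  f 0 = 1 /\
  (forall x, 0 <= x <= phih -> 0 < f x <= 1) /\
  strict_decr_on (fun x => 0 <= x <= phih) f /\
  (forall x y t, 0 <= x <= phih -> 0 <= y <= phih -> x <> y -> 0 < t < 1 ->
     t * f x + (1 - t) * f y < f (t * x + (1 - t) * y)) /\
  (forall x, 0 < x < phih -> ex_derive f x).

Fixpoint prodD (c beta : R) (n : nat) : R :=
  match n with
  | O => 1
  | S m => prodD c beta m * (c + INR (S m) * beta)
  end.

Definition e_rate (eta p : R) : R := eta / (1 - p).

(* D_i(lambda): stationary probability of no waiting driver *)
Definition Dfun (f : R -> R) (phi eta p beta lam : R) : R :=
  / Series (fun n => (e_rate eta p) ^ n / prodD (lam * f phi) beta n).

(* B_i(lambda): fraction of passengers who do not take a ride *)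
Definition Bfun (f : R -> R) (phi eta p beta lam : R) : R :=
  Dfun f phi eta p beta lam + (1 - f phi) * (1 - Dfun f phi eta p beta lam).

(* (a) g(l) = Q1(l) - Q2(Lam - l) is continuous and strictly monotone on [0, Lam], hence
   injective. The square g^2 attains its minimum there; two distinct minimisers would carry
   values of g of equal modulus and, by injectivity, of opposite signs, so the intermediate
   value theorem gives a zero of g between them, forcing both values to vanish.
   (b) D(lam) = 1 / Z(lam f(phi)) with Z(c) = sum_n e^n / prod_(a <= n) (c + a beta). Each term
   is nonincreasing in c, strictly for n = 1, bounded by (e/beta)^n / n!, and Lipschitz in c
   with a summable constant; so Z >= 1 is strictly decreasing and Lipschitz. Hence D, and
   B = f(phi) D + 1 - f(phi), are strictly increasing and Lipschitz for every platform. *)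

From Stdlib Require Import Reals Lra Lia Factorial.
From Coquelicot Require Import Coquelicot.
Open Scope R_scope.

Definition clamp (a b y : R) : R := Rmax a (Rmin b y).

Lemma clamp_in a b y : a <= b -> a <= clamp a b y <= b.
Proof. intros; unfold clamp, Rmax, Rmin; repeat destruct Rle_dec; lra. Qed.

Lemma clamp_id a b y : a <= y <= b -> clamp a b y = y.
Proof. intros; unfold clamp, Rmax, Rmin; repeat destruct Rle_dec; lra. Qed.

Lemma clamp_nonexpansive a b y z : a <= b -> Rabs (clamp a b y - clamp a b z) <= Rabs (y - z).
Proof.
  intros; unfold clamp, Rmax, Rmin, Rabs.
  repeat destruct Rle_dec; repeat destruct Rcase_abs; lra.
Qed.

Lemma filterlim_nonexpansive_within (D P : R -> Prop) (h : R -> R) x :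
  (forall y, D y -> P (h y)) ->
  (forall y z, D y -> D z -> Rabs (h y - h z) <= Rabs (y - z)) ->
  D x ->
  filterlim h (within D (locally x)) (within P (locally (h x))).
Proof.
  intros HDP Hh Dx A [eps HA]; exists eps; intros y Hy Dy.
  apply HA; [|exact (HDP y Dy)].
  change (Rabs (h y - h x) < eps); change (Rabs (y - x) < eps) in Hy.
  eapply Rle_lt_trans; [apply Hh|]; assumption.
Qed.

Lemma cont_on_minus (P : R -> Prop) (Q1 Q2 : R -> R) :
  cont_on P Q1 -> cont_on P Q2 -> cont_on P (fun x => Q1 x - Q2 x).
Proof.
  intros H1 H2 x Px.
  apply (filterlim_comp_2 (G := locally (Q1 x)) (H := locally (- Q2 x))
           Q1 (fun y => - Q2 y) Rplus); [exact (H1 x Px)| |].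
  - eapply filterlim_comp; [exact (H2 x Px)|exact (filterlim_opp _)].
  - exact (@filterlim_plus R_AbsRing R_NormedModule (Q1 x) (- Q2 x)).
Qed.

Lemma cont_on_reflect (Lam : R) (Q : R -> R) :
  cont_on (fun x => 0 <= x <= Lam) Q -> cont_on (fun x => 0 <= x <= Lam) (fun x => Q (Lam - x)).
Proof.
  intros HQ x Px; eapply filterlim_comp; [|apply HQ; lra].
  apply filterlim_nonexpansive_within; [intros; lra| |exact Px].
  intros y z _ _; rewrite <- Rabs_Ropp; right; f_equal; ring.
Qed.

(* Clamping extends a function continuous on [a, b] to all of R, where the Stdlib
   intermediate and extreme value theorems apply. *)
Lemma continuity_clamp_extension a b (g : R -> R) :
  a <= b -> cont_on (fun x => a <= x <= b) g -> continuity (fun y => g (clamp a b y)).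
Proof.
  intros Hab Hg y; apply continuity_pt_filterlim.
  eapply filterlim_comp; [|apply Hg, clamp_in, Hab].
  apply (filterlim_filter_le_1 (F := within (fun _ => True) (locally y))).
  - intros A HA; exact (filter_imp _ _ (fun z Hz => Hz I) HA).
  - apply filterlim_nonexpansive_within; auto using clamp_in, clamp_nonexpansive.
Qed.

Section SquareArgmin.

Variables (a b : R) (g : R -> R).
Hypothesis Hab : a <= b.
Hypothesis Hg : cont_on (fun x => a <= x <= b) g.

Let g_ext := fun y => g (clamp a b y).

Lemma g_ext_id y : a <= y <= b -> g_ext y = g y.
Proof. intros; unfold g_ext; rewrite clamp_id; auto. Qed.

Lemma exists_root_on l l' :
  a <= l <= b -> a <= l' <= b -> g l * g l' <= 0 -> exists z, a <= z <= b /\ g z = 0.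
Proof.
  intros Hl Hl' Hsign.
  assert (Hext := continuity_clamp_extension a b g Hab Hg).
  destruct (Rle_dec l l') as [Hle|Hgt].
  - destruct (IVT_cor g_ext l l' Hext Hle) as [z [Hz Hgz]]; [rewrite !g_ext_id; auto|].
    exists z; split; [lra|]; rewrite <- g_ext_id; auto; lra.
  - destruct (IVT_cor g_ext l' l Hext ltac:(lra)) as [z [Hz Hgz]]; [rewrite !g_ext_id; lra|].
    exists z; split; [lra|]; rewrite <- g_ext_id; auto; lra.
Qed.

Definition is_sq_argmin l := a <= l <= b /\ forall m, a <= m <= b -> g l ^ 2 <= g m ^ 2.

Lemma sq_argmin_exists : exists l, is_sq_argmin l.
Proof.
  destruct (continuity_ab_min (fun y => g_ext y * g_ext y) a b Hab) as [l [Hmin Hl]].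
  - intros c _; exact (continuity_pt_mult _ _ c (continuity_clamp_extension a b g Hab Hg c)
                         (continuity_clamp_extension a b g Hab Hg c)).
  - exists l; split; auto; intros m Hm.
    specialize (Hmin m Hm); simpl in Hmin; rewrite !g_ext_id in Hmin by auto; nra.
Qed.

Lemma sq_argmin_unique :
  (forall x y, a <= x <= b -> a <= y <= b -> g x = g y -> x = y) ->
  exists! l, is_sq_argmin l.
Proof.
  intros Hinj; destruct sq_argmin_exists as [l Hl]; exists l; split; auto.
  intros l' Hl'; destruct Hl as [Hl Hmin]; destruct Hl' as [Hl' Hmin'].
  apply Hinj; auto.
  assert (Hsq : g l ^ 2 = g l' ^ 2) by (apply Rle_antisym; auto).
  destruct (Rle_dec (g l * g l') 0) as [Hsign|Hsign].
  - destruct (exists_root_on l l' Hl Hl' Hsign) as [z [Hz Hgz]].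
    specialize (Hmin z Hz); rewrite Hgz, pow_i in Hmin by lia.
    assert (g l = 0) by nra; assert (g l' = 0) by nra; lra.
  - assert (Hfac : (g l - g l') * (g l + g l') = 0) by (simpl in Hsq; lra).
    destruct (Rmult_integral _ _ Hfac); nra.
Qed.

End SquareArgmin.

Lemma strict_mono_injective (P : R -> Prop) (g : R -> R) :
  strict_incr_on P g \/ strict_decr_on P g ->
  forall x y, P x -> P y -> g x = g y -> x = y.
Proof.
  intros Hg x y Px Py Hxy.
  destruct (Rtotal_order x y) as [Hlt|[Heq|Hgt]]; [exfalso|exact Heq|exfalso];
    destruct Hg as [Hg|Hg];
    [specialize (Hg x y Px Py Hlt)|specialize (Hg x y Px Py Hlt)
    |specialize (Hg y x Py Px Hgt)|specialize (Hg y x Py Px Hgt)]; lra.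
Qed.

Lemma wardrop_equilibrium_unique (Lam : R) (Q1 Q2 : R -> R) :
  0 < Lam ->
  cont_on (fun x => 0 <= x <= Lam) Q1 ->
  cont_on (fun x => 0 <= x <= Lam) Q2 ->
  (strict_incr_on (fun x => 0 <= x <= Lam) Q1 /\ strict_incr_on (fun x => 0 <= x <= Lam) Q2) \/
  (strict_decr_on (fun x => 0 <= x <= Lam) Q1 /\ strict_decr_on (fun x => 0 <= x <= Lam) Q2) ->
  exists! l, wardrop_argmin Lam Q1 Q2 l.
Proof.
  intros HLam HQ1 HQ2 Hmono.
  apply (sq_argmin_unique 0 Lam (fun l => Q1 l - Q2 (Lam - l))); [lra| |].
  - apply cont_on_minus; [exact HQ1|exact (cont_on_reflect Lam Q2 HQ2)].
  - apply strict_mono_injective.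
    destruct Hmono as [[H1 H2]|[H1 H2]]; [left|right]; intros x y Hx Hy Hxy;
      specialize (H1 x y Hx Hy Hxy);
      specialize (H2 (Lam - y) (Lam - x) ltac:(lra) ltac:(lra) ltac:(lra)); lra.
Qed.

Lemma INR_le_pow2 n : INR n <= 2 ^ n.
Proof.
  induction n as [|n IH]; [simpl; lra|].
  rewrite S_INR; simpl pow; pose proof (pow_R1_Rle 2 n); lra.
Qed.

Lemma ex_series_exp y : ex_series (fun n => y ^ n / INR (fact n)).
Proof.
  exists (exp y); eapply is_series_ext; [|exact (is_exp_Reals y)].
  intros n; rewrite pow_n_pow; reflexivity.
Qed.

Lemma Series_nonneg (a : nat -> R) : (forall n, 0 <= a n) -> ex_series a -> 0 <= Series a.
Proof.
  intros Ha Hex; rewrite <- (Rmult_0_l (Series a)), <- Series_scal_l.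
  apply Series_le; auto; intros n; specialize (Ha n); lra.
Qed.

Lemma Series_ge_head (a : nat -> R) : (forall n, 0 <= a n) -> ex_series a -> a O <= Series a.
Proof.
  intros Ha Hex; rewrite Series_incr_1 by exact Hex.
  assert (0 <= Series (fun n => a (S n))); [|lra].
  apply Series_nonneg; [intros n; apply Ha|exact (proj1 (ex_series_incr_1 a) Hex)].
Qed.

Lemma Series_sub_bound (a b m : nat -> R) (k : R) :
  (forall n, 0 <= a n - b n <= k * m n) -> ex_series a -> ex_series b -> ex_series m ->
  0 <= Series a - Series b <= k * Series m.
Proof.
  intros Hab Ha Hb Hm; rewrite <- Series_minus, <- Series_scal_l by assumption.
  split; [apply Series_nonneg; [apply Hab|exact (ex_series_minus a b Ha Hb)]|].
  apply Series_le; [apply Hab|exact (ex_series_scal_l k m Hm)].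
Qed.

Definition lipschitz_on (P : R -> Prop) (k : R) (Q : R -> R) : Prop :=
  forall x y, P x -> P y -> Rabs (Q x - Q y) <= k * Rabs (x - y).

Lemma lipschitz_on_cont_on (P : R -> Prop) (k : R) (Q : R -> R) :
  0 <= k -> lipschitz_on P k Q -> cont_on P Q.
Proof.
  intros Hk HQ x Px A [eps HA].
  assert (Hd : 0 < eps / (k + 1)) by (apply Rdiv_lt_0_compat; [apply cond_pos|lra]).
  exists (mkposreal _ Hd); intros y Hy Py; apply HA.
  change (Rabs (Q y - Q x) < eps); change (Rabs (y - x) < eps / (k + 1)) in Hy.
  pose proof (cond_pos eps); pose proof (HQ y x Py Px).
  assert (k * Rabs (y - x) <= k * (eps / (k + 1))) by (apply Rmult_le_compat_l; lra).
  assert (k * (eps / (k + 1)) < eps); [|lra].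
  apply (Rmult_lt_reg_r (k + 1)); [lra|]; field_simplify; lra.
Qed.

Section Products.

Variable b : R.
Hypothesis Hb : 0 < b.

Lemma prodD_ge_fact c n : 0 <= c -> INR (fact n) * b ^ n <= prodD c b n.
Proof.
  intros Hc; induction n as [|n IH]; [simpl; lra|].
  change (prodD c b (S n)) with (prodD c b n * (c + INR (S n) * b)).
  rewrite fact_simpl, mult_INR.
  replace (INR (S n) * INR (fact n) * b ^ S n)
    with ((INR (fact n) * b ^ n) * (INR (S n) * b)) by (simpl; ring).
  assert (0 <= INR (fact n) * b ^ n) by (apply Rmult_le_pos; [apply pos_INR|apply pow_le; lra]).
  assert (0 <= INR (S n) * b) by (apply Rmult_le_pos; [apply pos_INR|lra]).
  apply Rmult_le_compat; lra.
Qed.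

Lemma prodD_pos c n : 0 <= c -> 0 < prodD c b n.
Proof.
  intros Hc; eapply Rlt_le_trans; [|exact (prodD_ge_fact c n Hc)].
  apply Rmult_lt_0_compat; [apply lt_0_INR, lt_O_fact|apply pow_lt, Hb].
Qed.

Lemma prodD_le_mono c c' n : 0 <= c <= c' -> prodD c b n <= prodD c' b n.
Proof.
  intros Hc; induction n as [|n IH]; [simpl; lra|].
  change (prodD ?c0 b (S n)) with (prodD c0 b n * (c0 + INR (S n) * b)).
  pose proof (prodD_pos c n (proj1 Hc)).
  assert (0 <= INR (S n) * b) by (apply Rmult_le_pos; [apply pos_INR|lra]).
  apply Rmult_le_compat; lra.
Qed.

Lemma prodD_sub_le c c' n :
  0 <= c <= c' -> b * (prodD c' b n - prodD c b n) <= INR n * (c' - c) * prodD c' b n.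
Proof.
  intros Hc; induction n as [|n IH]; [simpl; lra|].
  change (prodD ?c0 b (S n)) with (prodD c0 b n * (c0 + INR (S n) * b)).
  pose proof (prodD_pos c' n ltac:(lra)) as HP'.
  set (P := prodD c b n) in *; set (P' := prodD c' b n) in *.
  set (s := c + INR (S n) * b).
  assert (Hs : b <= s) by (unfold s; rewrite S_INR; pose proof (pos_INR n); nra).
  assert (b * (P' - P) * s <= INR n * (c' - c) * P' * s) by (apply Rmult_le_compat_r; lra).
  assert (0 <= INR n * (c' - c) * P' * (c' - c)).
  { repeat apply Rmult_le_pos; try lra; apply pos_INR. }
  assert (b * P' * (c' - c) <= (s + (c' - c)) * P' * (c' - c)) by (apply Rmult_le_compat_r; nra).
  replace (c' + INR (S n) * b) with (s + (c' - c)) by (unfold s; ring).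
  rewrite S_INR; clearbody s P P'; lra.
Qed.

End Products.

Section NormalisingConstant.

Variables x b : R.
Hypothesis Hx : 0 < x.
Hypothesis Hb : 0 < b.

Definition norm_term (c : R) (n : nat) : R := x ^ n / prodD c b n.

Definition norm_const (c : R) : R := Series (norm_term c).

Lemma norm_term_bound c n : 0 <= c -> 0 <= norm_term c n <= (x / b) ^ n / INR (fact n).
Proof.
  intros Hc; unfold norm_term.
  pose proof (prodD_pos b Hb c n Hc); pose proof (prodD_ge_fact b Hb c n Hc).
  assert (0 < INR (fact n)) by (apply lt_0_INR, lt_O_fact).
  assert (0 < b ^ n) by (apply pow_lt, Hb).
  assert (0 < x ^ n) by (apply pow_lt, Hx).
  assert (0 < INR (fact n) * b ^ n) by (apply Rmult_lt_0_compat; lra).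
  split; [apply Rlt_le, Rdiv_lt_0_compat; lra|].
  replace ((x / b) ^ n / INR (fact n)) with (x ^ n / (INR (fact n) * b ^ n))
    by (unfold Rdiv; rewrite Rpow_mult_distr, pow_inv; field; lra).
  apply Rmult_le_compat_l; [lra|]; apply Rinv_le_contravar; lra.
Qed.

Lemma ex_series_norm_term c : 0 <= c -> ex_series (norm_term c).
Proof.
  intros Hc; apply (@ex_series_le R_AbsRing R_CompleteNormedModule _
    (fun n => (x / b) ^ n / INR (fact n))); [|exact (ex_series_exp (x / b))].
  intros n; destruct (norm_term_bound c n Hc).
  change norm with Rabs; simpl; rewrite Rabs_pos_eq; lra.
Qed.

Lemma norm_term_sub_le c c' n : 0 <= c <= c' ->
  0 <= norm_term c n - norm_term c' n <= INR n * (c' - c) / b * norm_term c n.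
Proof.
  intros Hc.
  pose proof (prodD_pos b Hb c n ltac:(lra)); pose proof (prodD_pos b Hb c' n ltac:(lra)).
  pose proof (prodD_le_mono b Hb c c' n Hc); pose proof (prodD_sub_le b Hb c c' n Hc).
  pose proof (norm_term_bound c n ltac:(lra)).
  assert (Hdiff : norm_term c n - norm_term c' n
                  = b * (prodD c' b n - prodD c b n) / (b * prodD c' b n) * norm_term c n)
    by (unfold norm_term; field; lra).
  replace (INR n * (c' - c) / b) with (INR n * (c' - c) * prodD c' b n / (b * prodD c' b n))
    by (field; lra).
  rewrite Hdiff; split; [apply Rmult_le_pos; [apply Rdiv_le_0_compat|]; nra|].
  apply Rmult_le_compat_r; [lra|].
  apply Rmult_le_compat_r; [apply Rlt_le, Rinv_0_lt_compat; nra|assumption].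
Qed.

Lemma norm_term_sub_bound c c' n : 0 <= c <= c' ->
  0 <= norm_term c n - norm_term c' n <= (c' - c) / b * ((2 * x / b) ^ n / INR (fact n)).
Proof.
  intros Hc; destruct (norm_term_sub_le c c' n Hc) as [Hlo Hhi]; split; [exact Hlo|].
  destruct (norm_term_bound c n ltac:(lra)) as [Ht0 Ht].
  replace ((2 * x / b) ^ n / INR (fact n)) with (2 ^ n * ((x / b) ^ n / INR (fact n)))
    by (unfold Rdiv; rewrite !Rpow_mult_distr; ring).
  replace (INR n * (c' - c) / b * norm_term c n) with ((c' - c) / b * (INR n * norm_term c n))
    in Hhi by (unfold Rdiv; ring).
  assert (0 <= (c' - c) / b) by (apply Rdiv_le_0_compat; lra).
  (* n <= 2^n absorbs the factor n into a summable exponential series. *)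
  pose proof (INR_le_pow2 n); pose proof (pos_INR n).
  eapply Rle_trans; [exact Hhi|]; apply Rmult_le_compat_l, Rmult_le_compat; lra.
Qed.

Lemma norm_const_ge_1 c : 0 <= c -> 1 <= norm_const c.
Proof.
  intros Hc; replace 1 with (norm_term c 0) by (unfold norm_term; simpl; field).
  apply Series_ge_head; [intros n; apply norm_term_bound, Hc|apply ex_series_norm_term, Hc].
Qed.

Lemma norm_const_sub_bound :
  exists k, 0 <= k /\
    forall c c', 0 <= c <= c' -> 0 <= norm_const c - norm_const c' <= k * (c' - c).
Proof.
  set (m := fun n => (2 * x / b) ^ n / INR (fact n)).
  exists (Series m / b); split.
  - apply Rdiv_le_0_compat; [|exact Hb]; apply Series_nonneg; [|apply ex_series_exp].
    intros n; apply Rdiv_le_0_compat; [apply pow_le, Rdiv_le_0_compat; lra|apply lt_0_INR, lt_O_fact].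
  - intros c c' Hc.
    replace (Series m / b * (c' - c)) with ((c' - c) / b * Series m) by (field; lra).
    apply Series_sub_bound; [intros n; apply norm_term_sub_bound, Hc
                            |apply ex_series_norm_term; lra|apply ex_series_norm_term; lra
                            |apply ex_series_exp].
Qed.

Lemma norm_const_decr c c' : 0 <= c < c' -> norm_const c' < norm_const c.
Proof.
  intros Hc.
  set (d := fun n => norm_term c n - norm_term c' n).
  assert (Hd : forall n, 0 <= d n) by (intros n; apply norm_term_sub_bound; lra).
  assert (Hexd : ex_series d)
    by (apply (ex_series_minus (norm_term c) (norm_term c')); apply ex_series_norm_term; lra).
  assert (Hsum : Series d = norm_const c - norm_const c')
    by (apply Series_minus; apply ex_series_norm_term; lra).
  assert (Hd1 : 0 < d 1%nat).
  { unfold d, norm_term; simpl prodD; simpl pow.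
    apply Rlt_0_minus, Rmult_lt_compat_l; [lra|]; apply Rinv_lt_contravar; nra. }
  assert (Hd1_le : d 1%nat <= Series d).
  { rewrite Series_incr_1 by exact Hexd.
    pose proof (Series_ge_head (fun n => d (S n)) (fun n => Hd (S n))
                  (proj1 (ex_series_incr_1 d) Hexd)).
    pose proof (Hd 0%nat); lra. }
  lra.
Qed.

Lemma inv_norm_const_lipschitz :
  exists k, 0 <= k /\ lipschitz_on (fun c => 0 <= c) k (fun c => / norm_const c).
Proof.
  destruct norm_const_sub_bound as [k [Hk Hsub]]; exists k; split; [exact Hk|].
  assert (Hle : forall c c', 0 <= c <= c' ->
            Rabs (/ norm_const c - / norm_const c') <= k * Rabs (c - c')).
  { intros c c' Hc; specialize (Hsub c c' Hc).
    pose proof (norm_const_ge_1 c (proj1 Hc)); pose proof (norm_const_ge_1 c' ltac:(lra)).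
    assert (/ norm_const c <= / norm_const c') by (apply Rinv_le_contravar; lra).
    rewrite Rabs_left1, (Rabs_left1 (c - c')) by lra.
    apply Rle_trans with (norm_const c - norm_const c'); [|lra].
    replace (- (/ norm_const c - / norm_const c'))
      with ((norm_const c - norm_const c') / (norm_const c * norm_const c')) by (field; lra).
    assert (1 <= norm_const c * norm_const c') by nra.
    apply Rle_div_l; nra. }
  intros c c' Hc Hc'; destruct (Rle_dec c c'); [apply Hle; lra|].
  rewrite Rabs_minus_sym, (Rabs_minus_sym c); apply Hle; lra.
Qed.

Lemma inv_norm_const_incr c c' : 0 <= c < c' -> / norm_const c < / norm_const c'.
Proof.
  intros Hc; pose proof (norm_const_ge_1 c' ltac:(lra)).
  apply Rinv_lt_contravar; [|apply norm_const_decr, Hc].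
  pose proof (norm_const_ge_1 c (proj1 Hc)); nra.
Qed.

End NormalisingConstant.

Section Platform.

Variables (f : R -> R) (phi eta p beta : R).
Hypothesis Hf : 0 < f phi.
Hypothesis Heta : 0 < eta.
Hypothesis Hp : p < 1.
Hypothesis Hbeta : 0 < beta.

Let D := Dfun f phi eta p beta.

Lemma Dfun_inv_norm_const lam : D lam = / norm_const (e_rate eta p) beta (lam * f phi).
Proof. reflexivity. Qed.

Lemma e_rate_pos : 0 < e_rate eta p.
Proof. apply Rdiv_lt_0_compat; lra. Qed.

Lemma Dfun_lipschitz : exists k, 0 <= k /\ lipschitz_on (fun x => 0 <= x) k D.
Proof.
  destruct (inv_norm_const_lipschitz _ beta e_rate_pos Hbeta) as [k [Hk Hlip]].
  exists (k * f phi); split; [apply Rmult_le_pos; lra|].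
  intros l l' Hl Hl'; rewrite !Dfun_inv_norm_const.
  eapply Rle_trans; [apply Hlip; apply Rmult_le_pos; lra|].
  rewrite <- Rmult_minus_distr_r, Rabs_mult, (Rabs_pos_eq (f phi)) by lra; right; ring.
Qed.

Lemma Dfun_strict_incr : strict_incr_on (fun x => 0 <= x) D.
Proof.
  intros l l' Hl Hl' Hll; rewrite !Dfun_inv_norm_const.
  apply inv_norm_const_incr; [exact e_rate_pos|exact Hbeta|split].
  - apply Rmult_le_pos; lra.
  - apply Rmult_lt_compat_r; lra.
Qed.

Lemma cont_on_Dfun : cont_on (fun x => 0 <= x) D.
Proof. destruct Dfun_lipschitz as [k [Hk Hlip]]; exact (lipschitz_on_cont_on _ k _ Hk Hlip). Qed.

Lemma Bfun_affine lam : Bfun f phi eta p beta lam = f phi * D lam + (1 - f phi).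
Proof. unfold Bfun; fold D; ring. Qed.

Lemma Bfun_lipschitz : exists k, 0 <= k /\ lipschitz_on (fun x => 0 <= x) k (Bfun f phi eta p beta).
Proof.
  destruct Dfun_lipschitz as [k [Hk Hlip]].
  exists (f phi * k); split; [apply Rmult_le_pos; lra|].
  intros l l' Hl Hl'; rewrite !Bfun_affine.
  replace (f phi * D l + (1 - f phi) - (f phi * D l' + (1 - f phi))) with (f phi * (D l - D l'))
    by ring.
  rewrite Rabs_mult, Rabs_pos_eq, Rmult_assoc by lra.
  apply Rmult_le_compat_l; [lra|apply Hlip; assumption].
Qed.

Lemma Bfun_strict_incr : strict_incr_on (fun x => 0 <= x) (Bfun f phi eta p beta).
Proof.
  intros l l' Hl Hl' Hll; rewrite !Bfun_affine.
  pose proof (Dfun_strict_incr l l' Hl Hl' Hll); nra.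
Qed.

Lemma cont_on_Bfun : cont_on (fun x => 0 <= x) (Bfun f phi eta p beta).
Proof. destruct Bfun_lipschitz as [k [Hk Hlip]]; exact (lipschitz_on_cont_on _ k _ Hk Hlip). Qed.

End Platform.

Theorem lemma2 :
  (* (a) existence and uniqueness of the Wardrop equilibrium *)
  (forall (Lam : R) (Q1 Q2 : R -> R),
     0 < Lam ->
     cont_on (fun x => 0 <= x <= Lam) Q1 ->
     cont_on (fun x => 0 <= x <= Lam) Q2 ->
     ((strict_incr_on (fun x => 0 <= x <= Lam) Q1 /\
       strict_incr_on (fun x => 0 <= x <= Lam) Q2) \/
      (strict_decr_on (fun x => 0 <= x <= Lam) Q1 /\
       strict_decr_on (fun x => 0 <= x <= Lam) Q2)) ->
     exists! l, wardrop_argmin Lam Q1 Q2 l)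
  /\
  (* (b) D_i and B_i are continuous, strictly monotone in lambda_i >= 0,
     with the same direction for both platforms *)
  (forall (phih : R) (f : R -> R)
          (phi1 eta1 p1 beta1 phi2 eta2 p2 beta2 : R),
     admissible_f phih f ->
     0 <= phi1 <= phih -> 0 < eta1 -> 0 <= p1 < 1 -> 0 < beta1 ->
     0 <= phi2 <= phih -> 0 < eta2 -> 0 <= p2 < 1 -> 0 < beta2 ->
     (cont_on (fun x => 0 <= x) (Dfun f phi1 eta1 p1 beta1) /\
      cont_on (fun x => 0 <= x) (Dfun f phi2 eta2 p2 beta2) /\
      ((strict_incr_on (fun x => 0 <= x) (Dfun f phi1 eta1 p1 beta1) /\
        strict_incr_on (fun x => 0 <= x) (Dfun f phi2 eta2 p2 beta2)) \/
       (strict_decr_on (fun x => 0 <= x) (Dfun f phi1 eta1 p1 beta1) /\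
        strict_decr_on (fun x => 0 <= x) (Dfun f phi2 eta2 p2 beta2))))
     /\
     (cont_on (fun x => 0 <= x) (Bfun f phi1 eta1 p1 beta1) /\
      cont_on (fun x => 0 <= x) (Bfun f phi2 eta2 p2 beta2) /\
      ((strict_incr_on (fun x => 0 <= x) (Bfun f phi1 eta1 p1 beta1) /\
        strict_incr_on (fun x => 0 <= x) (Bfun f phi2 eta2 p2 beta2)) \/
       (strict_decr_on (fun x => 0 <= x) (Bfun f phi1 eta1 p1 beta1) /\
        strict_decr_on (fun x => 0 <= x) (Bfun f phi2 eta2 p2 beta2))))).
Proof.
  split; [exact wardrop_equilibrium_unique|].
  intros phih f phi1 eta1 p1 beta1 phi2 eta2 p2 beta2 [_ [Hf _]]
         Hphi1 Heta1 Hp1 Hbeta1 Hphi2 Heta2 Hp2 Hbeta2.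
  assert (Hf1 := proj1 (Hf phi1 Hphi1)); assert (Hf2 := proj1 (Hf phi2 Hphi2)).
  assert (Hp1' : p1 < 1) by lra; assert (Hp2' : p2 < 1) by lra.
  split; repeat split;
    auto using cont_on_Dfun, cont_on_Bfun, Dfun_strict_incr, Bfun_strict_incr.
Qed.
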